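(* For every integer $k\geq1$, the 2-group $\mathbb{S}ym(\mathsf D_{8k})$ is not split, i.e. the dihedral group $\mathsf D_{8k}$ is not permutationally split.
   Context: $\mathsf D_n=\langle r,s\mid r^n=s^2=e,\ sr=r^{-1}s\rangle$ is the dihedral group of order $2n$, regarded as a one-object groupoid. For a groupoid $\mathcal K$, $\mathbb{S}ym(\mathcal K)$ is the 2-group (monoidal groupoid with weakly invertible objects) whose objects are self-equivalences of $\mathcal K$, morphisms natural isomorphisms, tensor product composition. A 2-group is split if it is equivalent, via a monoidal functor admitting a pseudo-inverse up to monoidal natural isomorphism, to an elementary 2-group $\mathsf A[1]\rtimes\mathsf G[0]$ for some group $\mathsf G$ and left $\mathsf G$-module $\mathsf A$: the strict 2-group with objects the elements of $\mathsf G$, morphisms $(a,g):g\to g$ ($a\in\mathsf A$), composition $(a',g)\circ(a,g)=(a'+a,g)$, tensor $g\otimes g'=gg'$, $(a,g)\otimes(a',g')=(a+g\lhd a',gg')$, trivial associator and unitors. A group $\mathsf G$ is permutationally split if $\mathbb{S}ym(\mathsf G)$ is split. *)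

From HB Require Import structures.
From mathcomp Require Import all_boot all_order all_algebra all_fingroup all_solvable.
Set Implicit Arguments.
Unset Strict Implicit.
Unset Printing Implicit Defensive.

(* Strict monoidal groupoids, presented by raw data: a type of objects, a    *)
(* type of raw arrows, predicates selecting the genuine objects/arrows,      *)
(* source/target, identities, (vertical) composition [comp g f = g o f],     *)
(* tensor on objects and arrows, and the unit object.  Both 2-groups we need *)
(* (Sym(G) and the elementary A[1] x| G[0]) are strict monoidal (trivial     *)
(* associator and unitors), so this presentation suffices.                   *)
Record M2G := {
  ob : Type;
  ar : Type;
  isob : ob -> Prop;
  isar : ar -> Prop;
  src : ar -> ob;
  tgt : ar -> ob;
  idar : ob -> ar;
  comp : ar -> ar -> ar;
  tob : ob -> ob -> ob;
  tar : ar -> ar -> ar;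
  unit : ob
}.

Arguments isob {_}. Arguments isar {_}. Arguments src {_}. Arguments tgt {_}.
Arguments idar {_}. Arguments comp {_}. Arguments tob {_}. Arguments tar {_}.

Definition hom (C : M2G) (a : ar C) (x y : ob C) : Prop :=
  isar a /\ src a = x /\ tgt a = y.

Definition iso (C : M2G) (a : ar C) : Prop :=
  exists b, hom b (tgt a) (src a) /\ comp b a = idar (src a)
                                  /\ comp a b = idar (tgt a).

(* Sym(G) for a group G (the whole finGroupType gT) viewed as a one-object   *)
(* groupoid.  Self-equivalences of a one-object groupoid are exactly the     *)
(* group automorphisms; a natural isomorphism f => g is an element a with    *)
(* a * f(x) = g(x) * a for all x.  Raw arrows are triples (f, g, a).         *)
(* Tensor is composition: f (x) g = f o g, which as permutations is g * f    *)
(* (mathcomp: (g * f) x = f (g x)).  The tensor of a : f => g and            *)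
(* a' : f' => g' is the horizontal composite, with component g(a') * a.      *)
Section SymDef.
Variable gT : finGroupType.
Local Open Scope group_scope.

Definition sym_isob (f : {perm gT}) : Prop := f \in Aut [set: gT].
Definition sym_isar (p : {perm gT} * {perm gT} * gT) : Prop :=
  sym_isob p.1.1 /\ sym_isob p.1.2 /\ forall x : gT, p.2 * p.1.1 x = p.1.2 x * p.2.

Definition Sym : M2G := {|
  ob := {perm gT};
  ar := ({perm gT} * {perm gT} * gT)%type;
  isob := sym_isob;
  isar := sym_isar;
  src := fun p => p.1.1;
  tgt := fun p => p.1.2;
  idar := fun f => (f, f, 1);
  comp := fun q p => (p.1.1, q.1.2, q.2 * p.2);
  tob := fun f g => g * f;
  tar := fun p q => (q.1.1 * p.1.1, q.1.2 * p.1.2, p.1.2 q.2 * p.2);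
  unit := 1
|}.
End SymDef.

Record grp := {
  gcar :> Type;
  gmul : gcar -> gcar -> gcar;
  gone : gcar;
  ginv : gcar -> gcar;
  gmulA : forall x y z, gmul x (gmul y z) = gmul (gmul x y) z;
  gmul1x : forall x, gmul gone x = x;
  gmulx1 : forall x, gmul x gone = x;
  gmulVx : forall x, gmul (ginv x) x = gone;
  gmulxV : forall x, gmul x (ginv x) = gone
}.

Definition is_left_module (G : grp) (A : zmodType) (act : G -> A -> A) : Prop :=
  (forall g (a b : A), act g (a + b)%R = (act g a + act g b)%R) /\
  (forall a, act (@gone G) a = a) /\
  (forall g h a, act (gmul g h) a = act g (act h a)).

(* The elementary 2-group A[1] x| G[0]: objects g, arrows (a, g) : g -> g,  *)
Definition elem (G : grp) (A : zmodType) (act : G -> A -> A) : M2G := {|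
  ob := gcar G;
  ar := (A * gcar G)%type;
  isob := fun _ => True;
  isar := fun _ => True;
  src := fun p => p.2;
  tgt := fun p => p.2;
  idar := fun g => (0%R, g);
  comp := fun q p => ((q.1 + p.1)%R, p.2);
  tob := @gmul G;
  tar := fun p q => ((p.1 + act p.2 q.1)%R, @gmul G p.2 q.2);
  unit := @gone G
|}.

Record MF (C D : M2G) := {
  F0 : ob C -> ob D;
  F1 : ar C -> ar D;
  phi : ob C -> ob C -> ar D;   (* phi x y : F x (x) F y -> F (x (x) y) *)
  phi0 : ar D                   (* phi0 : I -> F I *)
}.
Arguments F0 {_ _}. Arguments F1 {_ _}. Arguments phi {_ _}. Arguments phi0 {_ _}.

Definition is_monfun (C D : M2G) (F : MF C D) : Prop :=
  (forall x, isob x -> isob (F0 F x)) /\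
  (forall a x y, isob x -> isob y -> hom a x y -> hom (F1 F a) (F0 F x) (F0 F y)) /\
  (forall x, isob x -> F1 F (idar x) = idar (F0 F x)) /\
  (forall a b x y z, isob x -> isob y -> isob z -> hom a x y -> hom b y z ->
      F1 F (comp b a) = comp (F1 F b) (F1 F a)) /\
  (forall x y, isob x -> isob y ->
      hom (phi F x y) (tob (F0 F x) (F0 F y)) (F0 F (tob x y)) /\ iso (phi F x y)) /\
  (hom (phi0 F) (unit D) (F0 F (unit C)) /\ iso (phi0 F)) /\
  (forall a b x x' y y', isob x -> isob x' -> isob y -> isob y' ->
      hom a x x' -> hom b y y' ->
      comp (phi F x' y') (tar (F1 F a) (F1 F b)) = comp (F1 F (tar a b)) (phi F x y)) /\
  (* associativity coherence (associators are identities) *)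
  (forall x y z, isob x -> isob y -> isob z ->
      comp (phi F (tob x y) z) (tar (phi F x y) (idar (F0 F z)))
      = comp (phi F x (tob y z)) (tar (idar (F0 F x)) (phi F y z))) /\
  (* unit coherences (unitors are identities) *)
  (forall x, isob x ->
      comp (phi F (unit C) x) (tar (phi0 F) (idar (F0 F x))) = idar (F0 F x)) /\
  (forall x, isob x ->
      comp (phi F x (unit C)) (tar (idar (F0 F x)) (phi0 F)) = idar (F0 F x)).

Definition mf_comp (C D E : M2G) (G : MF D E) (F : MF C D) : MF C E := {|
  F0 := fun x => F0 G (F0 F x);
  F1 := fun a => F1 G (F1 F a);
  phi := fun x y => comp (F1 G (phi F x y)) (phi G (F0 F x) (F0 F y));
  phi0 := comp (F1 G (phi0 F)) (phi0 G)
|}.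

Definition mf_id (C : M2G) : MF C C := {|
  F0 := id; F1 := id;
  phi := fun x y => idar (tob x y);
  phi0 := idar (unit C)
|}.

Definition is_monnatiso (C D : M2G) (F G : MF C D) (theta : ob C -> ar D) : Prop :=
  (forall x, isob x -> hom (theta x) (F0 F x) (F0 G x) /\ iso (theta x)) /\
  (forall a x y, isob x -> isob y -> hom a x y ->
      comp (theta y) (F1 F a) = comp (F1 G a) (theta x)) /\
  (forall x y, isob x -> isob y ->
      comp (theta (tob x y)) (phi F x y) = comp (phi G x y) (tar (theta x) (theta y))) /\
  comp (theta (unit C)) (phi0 F) = phi0 G.

Definition mon_equiv (C D : M2G) : Prop :=
  exists (F : MF C D) (K : MF D C),
    is_monfun F /\ is_monfun K /\
    (exists theta, is_monnatiso (mf_comp K F) (mf_id C) theta) /\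
    (exists theta', is_monnatiso (mf_comp F K) (mf_id D) theta').

Definition split2 (C : M2G) : Prop :=
  exists (G : grp) (A : zmodType) (act : G -> A -> A),
    is_left_module act /\ mon_equiv C (elem act).

Definition permutationally_split (gT : finGroupType) : Prop := split2 (Sym gT).

From Pilot Require Import Defs.
From HB Require Import structures.
From mathcomp Require Import all_boot all_order all_algebra all_fingroup all_solvable.
From mathcomp Require Import zify.
Set Implicit Arguments. Unset Strict Implicit. Unset Printing Implicit Defensive.

(* 1. An obstruction to splitting, valid for every finite group H.  In an
      elementary 2-group A[1] x| G[0] all arrows are endomorphisms and the
      tensor product of objects is a strict group law.  Transport this along
      a monoidal equivalence F : Sym(H) -> A[1] x| G[0] with pseudo-inverse K:
      if rho is an automorphism whose square is inner and g = F(rho), then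
      g * g = 1 in G, and beta = K(g) is isomorphic to rho in Sym(H).  The
      components c of K(g) (x) K(g) -> K(g * g) and d of 1 -> K(1) satisfy
      beta o beta = conj(d^-1 c), and the unit and associativity coherences
      of K force beta (d^-1 c) = d^-1 c (Theorem [split_obstruction]).

   2. A computation in D = <x> x| <y> with #[x] = 8k, #[y] = 2, and z = x^4k
      its central involution.  The assignment x |-> xz, y |-> xy extends to an
      automorphism rho with inner square.  Every conjugate beta of rho sends
      x to x^e with e = 4k +- 1 and y to x^l y with l odd, and a parity
      argument on the powers of x and z shows that no such beta satisfies the
      conclusion of the obstruction (Lemma [no_split_square]). *)

Section AutomorphismFacts.
Local Open Scope group_scope.
Variables (gT : finGroupType) (f : {perm gT}).
Hypothesis Af : f \in Aut [set: gT].

Lemma aut_mul u v : f (u * v) = f u * f v.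
Proof. exact: (morphicP (Aut_morphic Af)); rewrite inE. Qed.

Lemma aut_one : f 1 = 1.
Proof. by rewrite -(autmE Af) morph1. Qed.

Lemma aut_inv u : f u^-1 = (f u)^-1.
Proof. by rewrite -(autmE Af) morphV ?inE. Qed.

Lemma aut_exp u n : f (u ^+ n) = f u ^+ n.
Proof. by rewrite -(autmE Af) morphX ?inE. Qed.

Lemma aut_conj u v : f (u ^ v) = f u ^ f v.
Proof. by rewrite -(autmE Af) morphJ ?inE. Qed.

End AutomorphismFacts.

Section Obstruction.
Local Open Scope group_scope.
Variable gT : finGroupType.

Lemma sym_homP (p : ar (Defs.Sym gT)) (f g : {perm gT}) :
  Defs.hom p f g -> forall u, f u = g u ^ p.2.
Proof. by case=> [[_ [_ Hp]] [<- <-]] u; rewrite conjgE -Hp mulKg. Qed.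

Lemma sym_hom (f g : {perm gT}) (a : gT) :
  f \in Aut [set: gT] -> g \in Aut [set: gT] -> (forall u, f u = g u ^ a) ->
  @Defs.hom (Defs.Sym gT) (f, g, a) f g.
Proof.
move=> Af Ag Hfg; split; last by [].
by do 2!split=> //; move=> u /=; rewrite Hfg conjgE !mulgA mulgV mul1g.
Qed.

Lemma elem_hom_eq (G : grp) (A : zmodType) (act : G -> A -> A)
    (a : ar (elem act)) g h :
  Defs.hom a g h -> g = h.
Proof. by case=> _ [<- <-]. Qed.

(* beta squares to the conjugation by an element that beta fixes: the
   property that every automorphism in the image of a splitting enjoys. *)
Definition split_square (beta : {perm gT}) : Prop :=
  exists2 h, forall u, beta (beta u) = u ^ h & beta h = h.

Section Equivalence.
Variables (G : grp) (A : zmodType) (act : G -> A -> A).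
Variables (F : MF (Defs.Sym gT) (elem act)) (K : MF (elem act) (Defs.Sym gT)).
Variables (theta : {perm gT} -> ar (Defs.Sym gT)) (theta' : G -> ar (elem act)).
Hypotheses (HF : is_monfun F) (HK : is_monfun K).
Hypothesis Htheta : is_monnatiso (mf_comp K F) (mf_id (Defs.Sym gT)) theta.
Hypothesis Htheta' : is_monnatiso (mf_comp F K) (mf_id (elem act)) theta'.

Lemma K_aut g : Defs.F0 K g \in Aut [set: gT].
Proof. exact: (proj1 HK g I). Qed.

Lemma FK_ob g : Defs.F0 F (Defs.F0 K g) = g.
Proof. exact: elem_hom_eq (proj1 (proj1 Htheta' g I)). Qed.

Lemma F_conj_eq (f f' : {perm gT}) a :
  f \in Aut [set: gT] -> f' \in Aut [set: gT] -> (forall u, f u = f' u ^ a) ->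
  Defs.F0 F f = Defs.F0 F f'.
Proof.
move=> Af Af' Hff'; case: HF => _ [HF1 _].
exact: elem_hom_eq (HF1 _ _ _ Af Af' (sym_hom Af Af' Hff')).
Qed.

Lemma KF_conj (f : {perm gT}) : f \in Aut [set: gT] ->
  exists t, forall u, Defs.F0 K (Defs.F0 F f) u = f u ^ t.
Proof. by move=> Af; exists (theta f).2; apply: sym_homP (proj1 (proj1 Htheta f Af)). Qed.

Lemma K_tensor g u :
  Defs.F0 K (gmul g g) u = Defs.F0 K g (Defs.F0 K g u) ^ (phi K g g).2^-1.
Proof.
case: HK => _ [_ [_ [_ [Hphi _]]]].
have /sym_homP Hc := proj1 (Hphi g g I I).
by rewrite -[Defs.F0 K g (Defs.F0 K g u)]permM Hc conjgK.
Qed.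

Lemma K_unit u : u = Defs.F0 K (gone G) u ^ (phi0 K).2.
Proof.
case: HK => _ [_ [_ [_ [_ [[Hphi0 _] _]]]]].
by rewrite -(sym_homP Hphi0) perm1.
Qed.

(* If rho^2 is inner then F(rho) squares to the unit of G: both K(F(rho)^2)
   and K(1) are inner twists of the identity, so F identifies them. *)
Lemma F_square_unit (rho : {perm gT}) r :
  rho \in Aut [set: gT] -> (forall u, rho (rho u) = u ^ r) ->
  gmul (Defs.F0 F rho) (Defs.F0 F rho) = gone G.
Proof.
move=> Arho Hr; set g := Defs.F0 F rho.
have [t Ht] := KF_conj Arho.
rewrite -(FK_ob (gmul g g)) -(FK_ob (gone G)).
apply: (F_conj_eq (K_aut _) (K_aut _)) => u.
by rewrite K_tensor !Ht aut_conj // Hr [in LHS](K_unit u) -!conjgM.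
Qed.

(* For g g = 1, the coherences of K make K(g) square to conjugation by
   d^-1 c, an element fixed by K(g). *)
Lemma K_split_square g : gmul g g = gone G -> split_square (Defs.F0 K g).
Proof.
move=> gg1; set c := (phi K g g).2; set d := (phi0 K).2.
exists (d^-1 * c).
  move=> u; have := K_tensor g u; rewrite gg1 => Hgg.
  rewrite -[LHS](conjgKV c) -Hgg conjgM; congr (_ ^ c).
  by rewrite {2}(K_unit u) conjgK.
case: HK => _ [_ [_ [_ [Hphi [[Hphi0 _] [_ [Hass [Hlu Hru]]]]]]]].
have [[_ [Ac _]] _] := proj1 (Hphi g g I I).
have [[_ [Ad _]] _] := Hphi0.
have := f_equal snd (Hass g g g I I I).
have := f_equal snd (Hlu g I).
have := f_equal snd (Hru g I).
rewrite /= gg1 !aut_one // !mulg1 mul1g -/c -/d.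
move=> /(canRL (mulgK _)) -> /(canRL (mulgK _)) ->; rewrite !mul1g => Hassoc.
by rewrite aut_mul ?aut_inv ?K_aut // Hassoc.
Qed.

End Equivalence.

Theorem split_obstruction (rho : {perm gT}) r :
  permutationally_split gT -> rho \in Aut [set: gT] ->
  (forall u, rho (rho u) = u ^ r) ->
  exists2 beta : {perm gT}, beta \in Aut [set: gT] /\ split_square beta
                          & exists t, forall u, beta u = rho u ^ t.
Proof.
case=> G [A [act [_ [F [K [HF [HK [[theta Htheta] [theta' Htheta']]]]]]]]] Arho Hr.
exists (Defs.F0 K (Defs.F0 F rho)); last exact: (KF_conj Htheta Arho).
split; first exact: K_aut.
exact: (K_split_square HK (F_square_unit HF HK Htheta Htheta' Arho Hr)).
Qed.

End Obstruction.

Section Dihedral.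
Local Open Scope group_scope.
Variables (gT : finGroupType) (x y : gT) (k : nat).
Hypotheses (k_gt0 : 0 < k) (ox : #[x] = (8 * k)%N) (oy : #[y] = 2)
  (xJy : x ^ y = x^-1) (defG : <[x]> ><| <[y]> = [set: gT]).

Let z := x ^+ (4 * k).

Lemma dihedral_elem u : exists i, u = x ^+ i \/ u = x ^+ i * y.
Proof.
have [_ defXY _ _] := sdprodP defG.
have /mulsgP[_ _ /cycleP[i ->] /cycleP[j ->] ->] : u \in <[x]> * <[y]>.
  by rewrite defXY inE.
exists i; rewrite -(expg_mod_order y) oy.
by case: (j %% 2) (ltn_pmod j (isT : 0 < 2)) => [|[|//]] _; [left; rewrite mulg1 | right].
Qed.

Lemma invy : y^-1 = y.
Proof. by rewrite invg_expg oy. Qed.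

Lemma conjXy i : (x ^+ i) ^ y = (x ^+ i)^-1.
Proof. by rewrite conjXg xJy expVgn. Qed.

Lemma conjy_cycle a : a \in <[x]> -> y ^ a = a^-1 * a^-1 * y.
Proof. by case/cycleP=> i ->; rewrite conjgE -mulgA (conjgCV y) invy conjXy mulgA. Qed.

Lemma conj_cycle a b : a \in <[x]> -> b \in <[x]> -> a ^ b = a.
Proof.
move=> /cycleP[i ->] /cycleP[j ->].
by rewrite /conjg (commuteX2 i j (commute_refl x)) mulKg.
Qed.

Lemma expx_split a b : x ^+ (4 * k * a + b) = z ^+ a * x ^+ b.
Proof. by rewrite expgD expgM. Qed.

Lemma expz m : z ^+ m = if odd m then z else 1.
Proof.
have zz : z ^+ 2 = 1.
  by rewrite -expgM (_ : 4 * k * 2 = #[x])%N ?expg_order // ox; lia.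
rewrite -{1}(odd_double_half m) expgD -mul2n expgM zz expg1n mulg1.
by case: (odd m).
Qed.

Lemma mulzz : z * z = 1.
Proof. by rewrite -expg2 expz. Qed.

Lemma z_neq1 : z != 1.
Proof. by rewrite /z -order_dvdn ox; apply/negP => /dvdn_leq; lia. Qed.

Lemma z_mul_eq1 w : z * w = 1 -> w = z.
Proof. by move/mulg1_eq <-; apply: mulg1_eq mulzz. Qed.

Lemma zpow_eq1 m : z ^+ m = 1 -> ~~ odd m.
Proof. by rewrite expz; case: (odd m) => // /eqP; rewrite (negbTE z_neq1). Qed.

Lemma zpow_eqz m : z ^+ m = z -> odd m.
Proof. by rewrite expz; case: (odd m) => // /esym/eqP; rewrite (negbTE z_neq1). Qed.

Lemma commute_xz : commute x z.
Proof. exact/commuteX/commute_refl. Qed.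

Lemma xz_pow : (x * z) ^+ (4 * k) = z.
Proof. by rewrite (expgMn _ commute_xz) expz oddM /= mulg1. Qed.

(* x is not an involution, so no reflection commutes with x. *)
Lemma x_neq_invx : x != x^-1.
Proof.
rewrite eq_sym eq_invg_mul -expg2 -order_dvdn ox.
by apply/negP => /dvdn_leq; lia.
Qed.

(* z is not the square of an odd power of x, since 4 divides #[x]. *)
Lemma double_neq_z i : x ^+ (2 * i) = z -> ~~ odd i.
Proof.
move/eqP; rewrite eq_expg_mod_order ox => /eqP/(congr1 (modn^~ 4)).
by rewrite !modn_dvdm ?(dvdn_mulr k (isT : 4 %| 8)) //; lia.
Qed.

Lemma dihedral_morphism (rT : finGroupType) (x' y' : rT) :
  #[x'] %| #[x] -> #[y'] %| #[y] -> x' ^ y' = x'^-1 ->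
  exists f : {morphism [set: gT] >-> rT}, f x = x' /\ f y = y'.
Proof.
move=> dvd_x dvd_y x'Jy'.
pose fx := eltm_morphism dvd_x; pose fy := eltm_morphism dvd_y.
have actf : {in <[x]> & <[y]>, morph_act 'J 'J fx fy}.
  move=> _ _ /cycleP[i ->] /cycleP[j ->] /=.
  rewrite -(expg_mod_order y j) oy.
  case: (j %% 2) (ltn_pmod j (isT : 0 < 2)) => [|[|//]] _.
    by rewrite expg0 !morph1 !conjg1.
  rewrite expg1 conjXy morphV ?mem_cycle //= !eltmE eltm_id.
  by rewrite conjXg x'Jy' expVgn.
exists (sdprodm_morphism defG actf).
by rewrite /= sdprodmEl ?sdprodmEr ?cycle_id //= !eltm_id.
Qed.

Lemma rho_exists :
  exists2 rho : {perm gT}, rho \in Aut [set: gT] & rho x = x * z /\ rho y = x * y.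
Proof.
have dvd_x : #[x * z] %| #[x].
  by rewrite order_dvdn (expgMn _ commute_xz) expg_order expz ox oddM /= mulg1.
have dvd_y : #[x * y] %| #[y].
  by rewrite order_dvdn oy expg2 -mulgA -{1}invy -conjgE xJy mulgV.
have xzJxy : (x * z) ^ (x * y) = (x * z)^-1.
  rewrite conjgM (conj_cycle (a := x * z)) ?groupM ?cycle_id ?mem_cycle //.
  by rewrite /z -expgS conjXy.
have [f [fx fy]] := dihedral_morphism dvd_x dvd_y xzJxy.
have fz : f z = z by rewrite {1}/z morphX ?inE // fx xz_pow.
have x_im : x \in f @* [set: gT].
  have -> : x = f (x * z) by rewrite morphM ?inE // fx fz -mulgA mulzz mulg1.
  by rewrite mem_morphim ?inE.
have imf : f @* [set: gT] = [set: gT].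
  apply/eqP; rewrite eqEsubset subsetT /=.
  have [_ defXY _ _] := sdprodP defG.
  rewrite -{1}defXY mul_subG // cycle_subG //.
  have -> : y = x^-1 * f y by rewrite fy mulKg.
  by rewrite groupM ?groupV ?mem_morphim ?inE.
have injf : 'injm f by rewrite -card_im_injm imf.
exists (aut injf imf); first exact: Aut_aut.
by rewrite !autE ?inE.
Qed.

Lemma rho_square_inner (rho : {perm gT}) :
  rho \in Aut [set: gT] -> rho x = x * z -> rho y = x * y ->
  forall u, rho (rho u) = u ^ (x ^+ (2 * k).+1)^-1.
Proof.
move=> Arho rx ry; set a := (x ^+ (2 * k).+1)^-1.
have rz : rho z = z by rewrite {1}/z aut_exp // rx xz_pow.
have rrx : rho (rho x) = x by rewrite rx aut_mul // rz rx -mulgA mulzz mulg1.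
have rry : rho (rho y) = y ^ a.
  rewrite ry aut_mul // rx ry conjy_cycle ?groupV ?mem_cycle // invgK !mulgA.
  congr (_ * y); rewrite /z -expgS -expgSr -expgD; congr (x ^+ _); lia.
move=> u; have [i [-> | ->]] := dihedral_elem u.
  by rewrite !aut_exp // rrx conj_cycle ?groupV ?mem_cycle.
rewrite !aut_mul // !aut_exp // rrx rry conjMg.
by rewrite (conj_cycle (a := x ^+ i)) ?groupV ?mem_cycle.
Qed.

Lemma conj_rho_shape (rho beta : {perm gT}) t :
  rho x = x * z -> rho y = x * y -> (forall u, beta u = rho u ^ t) ->
  exists e l, [/\ e = (4 * k).+1 \/ e = (4 * k).-1, beta x = x ^+ e,
                  odd l & beta y = x ^+ l * y].
Proof.
move=> rx ry Hbeta.
have xz_x : x * z \in <[x]> by rewrite groupM ?cycle_id ?mem_cycle.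
have [i [Et | Et]] := dihedral_elem t; rewrite {}Et in Hbeta.
  have [j Ej] : exists j, (x ^+ i)^-1 = x ^+ j by apply/cycleP; rewrite groupV mem_cycle.
  exists (4 * k).+1, (1 + j + j); split; [by left | | by lia |].
    by rewrite Hbeta rx (conj_cycle (a := x * z)) ?mem_cycle // /z -expgS.
  rewrite Hbeta ry conjMg (conj_cycle (a := x)) ?cycle_id ?mem_cycle //.
  by rewrite conjy_cycle ?mem_cycle // Ej !mulgA -{1}(expg1 x) -!expgD.
exists (4 * k).-1, ((8 * k).-1 + i + i); split; [by right | | by lia |].
  rewrite Hbeta rx conjgM (conj_cycle (a := x * z)) ?mem_cycle // /z -expgS conjXy.
  apply/eqP; rewrite eq_invg_mul -expgD.
  have -> : ((4 * k).+1 + (4 * k).-1 = #[x])%N by rewrite ox; lia.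
  by rewrite expg_order.
rewrite Hbeta ry conjgM (conjMg x y) (conj_cycle (a := x)) ?cycle_id ?mem_cycle //.
have yJy : y ^ y = y by rewrite /conjg mulKg.
rewrite conjy_cycle ?mem_cycle // !conjMg !conjVg conjXy invgK xJy yJy.
by rewrite invg_expg ox !mulgA -!expgD.
Qed.

(* x^(e^2) = x, since (4k +- 1)^2 = 1 mod 8k. *)
Lemma exp_class_square e : e = (4 * k).+1 \/ e = (4 * k).-1 -> x ^+ (e * e) = x.
Proof.
move=> He; have [q ->] : exists q, (e * e = 8 * k * q + 1)%N.
  by case: He => ->; [exists (2 * k).+1 | exists (2 * k).-1]; nia.
by rewrite expgD expgM -ox expg_order expg1n mul1g.
Qed.

(* For such a beta, a square root h of beta^2 fixed by beta is a power x^m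
   (h centralizes x), and the conditions on h become relations on m. *)
Lemma split_square_relations (beta : {perm gT}) e l :
  beta \in Aut [set: gT] -> e = (4 * k).+1 \/ e = (4 * k).-1 ->
  beta x = x ^+ e -> beta y = x ^+ l * y -> split_square beta ->
  exists m, x ^+ (e * l + l + 2 * m) = 1 /\ x ^+ (e * m) = x ^+ m.
Proof.
move=> Abeta He bx b_y [h Hsq Hfix].
have bX m : beta (x ^+ m) = x ^+ (e * m) by rewrite aut_exp // bx -expgM.
have bbx : beta (beta x) = x by rewrite bx bX exp_class_square.
have [m Eh] : exists m, h = x ^+ m.
  have [m [Eh | Eh]] := dihedral_elem h; first by exists m.
  case/eqP: x_neq_invx; rewrite -{1}bbx Hsq Eh conjgM.
  by rewrite (conj_cycle (a := x)) ?cycle_id ?mem_cycle.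
rewrite {h}Eh in Hsq Hfix; exists m; split; last by rewrite -bX.
move: (Hsq y); rewrite b_y aut_mul // bX b_y conjy_cycle ?mem_cycle // mulgA.
move/mulIg => E; rewrite mul2n -addnn !expgD E.
by rewrite -!mulgA mulKg mulVg.
Qed.

(* The relations are contradictory: for e = 4k+1 they force m to be both even
   and odd, and for e = 4k-1 they force x^(2m) = z with m odd. *)
Lemma no_split_square (beta : {perm gT}) e l :
  beta \in Aut [set: gT] -> e = (4 * k).+1 \/ e = (4 * k).-1 ->
  beta x = x ^+ e -> odd l -> beta y = x ^+ l * y -> ~ split_square beta.
Proof.
move=> Abeta He bx odd_l b_y /(split_square_relations Abeta He bx b_y).
case=> m [rel_y rel_h]; case: He => De; rewrite {e bx}De in rel_y rel_h.
  have even_m : ~~ odd m.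
    apply: zpow_eq1; apply: (mulIg (x ^+ m)); rewrite mul1g -expx_split -rel_h.
    by congr (x ^+ _); lia.
  have : x ^+ (4 * k * l + 2 * (l + m)) = 1 by rewrite -rel_y; congr (x ^+ _); lia.
  by rewrite expx_split expz odd_l => /z_mul_eq1/double_neq_z; lia.
have : x ^+ (4 * k * l + 2 * m) = 1 by rewrite -rel_y; congr (x ^+ _); lia.
rewrite expx_split expz odd_l => /z_mul_eq1 x2m.
have : odd m.
  apply: zpow_eqz; rewrite -{2}x2m -[z ^+ m]mulg1 -(expg0 x) -expx_split.
  have -> : (4 * k * m + 0 = (4 * k).-1 * m + m)%N by lia.
  by rewrite expgD rel_h -expgD; congr (x ^+ _); lia.
by apply/negP/double_neq_z.
Qed.

End Dihedral.

Lemma dihedral_presentation q : 1 < q ->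
  exists x y : 'D_q.*2, [/\ #[x]%g = q, #[y]%g = 2,
                            (x ^ y = x^-1)%g & (<[x]> ><| <[y]> = [set: 'D_q.*2])%g].
Proof.
move=> q_gt1.
have /(isoGrpP _ (Grp_dihedral q_gt1)) [_] := isog_refl 'D_q.*2.
case/existsP=> -[x y] /eqP [defG xq y2 xJy]; exists x, y.
have nXY : (<[y]> \subset 'N(<[x]>))%g by rewrite cycle_subG inE -cycleJ xJy cycleV.
have oG := card_dihedral q_gt1.
have hc := mul_cardG <[x]>%G <[y]>%G.
rewrite /= -norm_joinEr // defG oG -!orderE in hc.
have dx : (#[x] %| q)%g by rewrite order_dvdn xq.
have dy : (#[y] %| 2)%g by rewrite order_dvdn y2.
have le_x := dvdn_leq (ltnW q_gt1) dx; have le_y := dvdn_leq (isT : 0 < 2) dy.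
have c_gt0 := cardG_gt0 (<[x]> :&: <[y]>)%G.
have [ox [oy c1]] : [/\ #[x]%g = q, #[y]%g = 2 & #|(<[x]> :&: <[y]>)%g| = 1].
  move: hc le_x le_y c_gt0 (order_gt0 x) (order_gt0 y).
  move: #|_| (#[x])%g (#[y])%g => c a b; rewrite -mul2n => E *.
  have b2 : b = 2 by nia.
  by subst b; split; nia.
have TI : (<[x]> :&: <[y]> = 1)%g by apply/eqP; rewrite trivg_card_le1 c1.
by split=> //; rewrite sdprodE // -norm_joinEr.
Qed.

(* mathcomp's 'D_m is the dihedral group of ORDER m; the paper's D_n has
   order 2n, so the paper's D_{8k} is 'D_(2 * (8 * k)). *)
Theorem proposition4p24 (k : nat) (hk : 1 <= k) :
  ~ permutationally_split ('D_(2 * (8 * k))).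
Proof.
rewrite mul2n => Hsplit.
have [x [y [ox oy xJy defG]]] := @dihedral_presentation (8 * k) ltac:(lia).
have [rho Arho [rx ry]] := rho_exists hk ox oy xJy defG.
have rho2 := rho_square_inner hk ox oy xJy defG Arho rx ry.
have [beta [Abeta beta_split] [t Hbeta]] := split_obstruction Hsplit Arho rho2.
have [e [l [He bx odd_l b_y]]] := conj_rho_shape hk ox oy xJy defG rx ry Hbeta.
exact: (no_split_square hk ox oy xJy defG Abeta He bx odd_l b_y beta_split).
Qed.
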